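(* Let $x_i,x_j\in\{x_1,\dots,x_n\}$ be adjacent observations, i.e. $x_i<x_j$ and there is no $x'\in\{x_1,\dots,x_n\}$ with $x_i<x'<x_j$. For any $\theta\in\mathbb{V}\cap\Theta$, the result \[\theta^*:=\arg\max_{v\in\mathbb{V}_{D(\theta)}\cap\Theta_1}L(v)\] of a local search over $\mathbb{V}_{D(\theta)}\cap\Theta_1$ has at most two breakpoints between $x_i$ and $x_j$, i.e. $|D(\theta^* )\cap(x_i,x_j)|\le2$.
   Context: Let $f$ be a probability density on $\mathbb{R}_{\ge0}$ satisfying the standing assumptions: (A1) $f$ is continuous and $f(x)>0$ for all $x>0$; (A2) there is $\beta\in\mathbb{R}$ such that for every $\lambda\in\mathbb{R}$, $\int_0^\infty e^{\lambda x}f(x)\,dx<\infty$ if and only if $\lambda<\beta$, and $\lim_{\lambda\to\beta^-}\int_0^\infty e^{\lambda x}f(x)\,dx=\infty$; (A3) for every $\lambda\in\mathbb{R}$, $\int_0^\infty e^{\lambda x}f(x)dx<\infty$ implies $\int_0^\infty x^2e^{\lambda x}f(x)dx<\infty$. Let $M$ be the measure on $\mathbb{R}_{\ge0}$ with density $f$. Fix data $x_1,\dots,x_n$ in $\mathbb{R}_{\ge0}$ with empirical distribution $\hat P=\frac1n\sum_{i=1}^n\delta_{x_i}$. $\Theta$ is the set of convex non-decreasing functions $\theta:\mathbb{R}_{\ge0}\to\mathbb{R}$, and $\Theta_1=\{\theta\in\Theta:\int e^{\theta}dM=1\}$. For $\theta\in\Theta$, $L(\theta):=\int\theta\,d\hat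 P-\int e^{\theta}\,dM+1\in[-\infty,\infty)$. $\mathbb{V}$ is the set of continuous piecewise linear functions $v:\mathbb{R}_{\ge0}\to\mathbb{R}$ with finitely many breakpoints; $D(v)=\{\tau\ge0: v'(\tau-)\neq v'(\tau+)\}$ is its set of breakpoints; for finite $S\subset\mathbb{R}_{\ge0}$, $\mathbb{V}_S=\{v\in\mathbb{V}:D(v)\subseteq S\}$. *)

From HB Require Import structures.
From mathcomp Require Import all_boot all_order all_algebra.
From mathcomp Require Import all_classical all_reals all_analysis.
Set Implicit Arguments. Unset Strict Implicit. Unset Printing Implicit Defensive.
Import Order.TTheory GRing.Theory Num.Theory.
Import numFieldNormedType.Exports.
Local Open Scope classical_set_scope.
Local Open Scope ring_scope.

Section Defs.
Variable R : realType.

Definition Rge0 : set R := `[0%R, +oo[%classic.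

(* Functions on R_{>=0} are represented as functions R -> R; only their
   values on [0, +oo[ matter for every notion below. *)

(* integral w.r.t. the measure M with density f on R_{>=0} *)
Definition intM (f : R -> R) (g : R -> R) : \bar R :=
  (\int[lebesgue_measure]_(x in Rge0) (g x * f x)%:E)%E.

Definition is_density (f : R -> R) : Prop :=
  measurable_fun Rge0 f /\
  (forall x, 0 <= x -> 0 <= f x) /\
  (\int[lebesgue_measure]_(x in Rge0) (f x)%:E = 1)%E.

Definition A1 (f : R -> R) : Prop :=
  {within Rge0, continuous f} /\ (forall x, 0 < x -> 0 < f x).

Definition mgf (f : R -> R) (lam : R) : \bar R := intM f (fun x => expR (lam * x)).

Definition A2 (f : R -> R) : Prop :=
  exists beta : R,
    (forall lam : R, (mgf f lam < +oo)%E <-> lam < beta) /\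
    (mgf f @ beta^'- --> +oo%E).

Definition A3 (f : R -> R) : Prop :=
  forall lam : R, (mgf f lam < +oo)%E ->
    (intM f (fun x => (x ^+ 2 * expR (lam * x))%R) < +oo)%E.

Definition Theta : set (R -> R) :=
  [set th | (forall x y t, 0 <= x -> 0 <= y -> 0 <= t <= 1 ->
               th (t * x + (1 - t) * y) <= t * th x + (1 - t) * th y) /\
            (forall x y, 0 <= x -> x <= y -> th x <= th y)].

Definition Theta1 (f : R -> R) : set (R -> R) :=
  [set th | Theta th /\ intM f (fun x => expR (th x)) = 1%E].

(* L(theta) = int theta dPhat - int e^theta dM + 1, with Phat the empirical
   distribution of the data x : 'I_n -> R *)
Definition Lik (f : R -> R) (n : nat) (x : 'I_n -> R) (th : R -> R) : \bar R :=
  ((n%:R^-1 * \sum_(i < n) th (x i))%:E - intM f (fun t => expR (th t)) + 1)%E.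

Definition rderiv_is (v : R -> R) (tau l : R) : Prop :=
  (fun h => (v (tau + h) - v tau) / h) @ 0^'+ --> l.
Definition lderiv_is (v : R -> R) (tau l : R) : Prop :=
  (fun h => (v tau - v (tau - h)) / h) @ 0^'+ --> l.

(* D(v): set of breakpoints (v'(tau-) <> v'(tau+)); tau = 0 has no left
   derivative on R_{>=0} and is never counted as a breakpoint *)
Definition breakpoints (v : R -> R) : set R :=
  [set tau | 0 < tau /\
     exists l r, lderiv_is v tau l /\ rderiv_is v tau r /\ l != r].

(* V: continuous piecewise linear functions on R_{>=0} with finitely many
   pieces: there is a finite list of knots such that v is affine on every
   interval of R_{>=0} not containing a knot in its interior *)
Definition Vset : set (R -> R) :=
  [set v | {within Rge0, continuous v} /\
     exists s : seq R, forall a b, 0 <= a -> a < b ->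
       (forall t, t \in s -> ~ (a < t < b)) ->
       exists c d : R, forall y, a <= y <= b -> v y = c * y + d].

Definition VS (S : set R) : set (R -> R) :=
  [set v | Vset v /\ breakpoints v `<=` S].

End Defs.

From HB Require Import structures.
From mathcomp Require Import all_boot all_order all_algebra.
From mathcomp Require Import all_classical all_reals all_analysis.
From mathcomp Require Import ring lra measurable_realfun.
Import Order.TTheory GRing.Theory Num.Theory.
Import numFieldNormedType.Exports.
Local Open Scope classical_set_scope.
Local Open Scope ring_scope.
Set Implicit Arguments. Unset Strict Implicit. Unset Printing Implicit Defensive.

(* Suppose the maximiser theta* had three breakpoints t1 < t2 < t3 between
   the adjacent observations x_i and x_j.  Subtract a small tent function that
   vanishes outside ]t1, t3[ and peaks at t2.  Since theta* is convex, its
   kinks at t1 and t3 are strictly convex, so for a small enough tent the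
   result is still convex; it is non-decreasing (it agrees with theta* on
   [0, t1]) and piecewise linear with breakpoints in D(theta).  It lies below
   theta*, strictly at t2, so adding a constant c > 0 renormalises it.  No
   observation lies in ]t1, t3[, hence the likelihood grows by exactly c,
   contradicting the maximality of theta*. *)

Section Convexity.
Variable R : realType.
Implicit Types (P : set R) (g h : R -> R) (a m p q t x y z : R).

Definition slope h x y := (h y - h x) / (y - x).

(* Three-slope form of convexity; on intervals it is equivalent to the
   Jensen form used in [Theta], see [convex_onP]. *)
Definition convex_on P h :=
  forall x z y, P x -> P z -> P y -> x < z < y -> slope h x z <= slope h x y.

Lemma slope_split h x z y : x < z < y ->
  slope h x y * (y - x) = slope h x z * (z - x) + slope h z y * (y - z).
Proof.
by move=> /andP[xz zy]; rewrite /slope !mulfVK ?subr_eq0 ?gt_eqF //; lra.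
Qed.

Lemma slope_le_chordE h x z y : x < z < y ->
  (slope h x z <= slope h x y) = (slope h x z <= slope h z y).
Proof.
move=> xzy; have := slope_split h xzy; case/andP: xzy => xz zy e.
by apply/idP/idP => H; nra.
Qed.

Lemma slope_chord_leE h x z y : x < z < y ->
  (slope h x y <= slope h z y) = (slope h x z <= slope h z y).
Proof.
move=> xzy; have := slope_split h xzy; case/andP: xzy => xz zy e.
by apply/idP/idP => H; nra.
Qed.

Lemma slope_add_affine h g m q x y : x != y ->
  g x = h x + m * x + q -> g y = h y + m * y + q ->
  slope g x y = slope h x y + m.
Proof.
by move=> xy gx gy; rewrite /slope gx gy; field; rewrite subr_eq0 eq_sym.
Qed.

Section ConvexOn.
Variables (P : set R) (h : R -> R).
Hypothesis cvx : convex_on P h.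

Lemma convex_on_slope_mid x z y : P x -> P z -> P y -> x < z < y ->
  slope h x z <= slope h z y.
Proof. by move=> Px Pz Py xzy; rewrite -slope_le_chordE //; apply: cvx. Qed.

Lemma convex_on_slope_right x z y : P x -> P z -> P y -> x < z < y ->
  slope h x y <= slope h z y.
Proof.
by move=> Px Pz Py xzy; rewrite slope_chord_leE //; apply: convex_on_slope_mid.
Qed.

Lemma convex_on_slope_le x1 y1 x2 y2 : P x1 -> P y1 -> P x2 -> P y2 ->
  x1 < y1 -> x2 < y2 -> x1 <= x2 -> y1 <= y2 -> slope h x1 y1 <= slope h x2 y2.
Proof.
move=> Px1 Py1 Px2 Py2 xy1 xy2 x12 y12.
have S1 : slope h x1 y1 <= slope h x1 y2.
  have [->|y12'] := eqVneq y1 y2; first exact: lexx.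
  by apply: cvx => //; rewrite xy1 lt_neqAle y12' y12.
apply: le_trans S1 _; have [->|x12'] := eqVneq x1 x2; first exact: lexx.
by apply: convex_on_slope_right => //; rewrite lt_neqAle x12' x12.
Qed.

End ConvexOn.

Lemma slope_le_convex_combE h x y t : x < y -> t < 1 ->
  (slope h x (t * x + (1 - t) * y) <= slope h x y) =
  (h (t * x + (1 - t) * y) <= t * h x + (1 - t) * h y).
Proof.
move=> xy t1; rewrite /slope; set z := t * x + (1 - t) * y.
have -> : z - x = (1 - t) * (y - x) by rewrite /z; ring.
rewrite invfM mulrA ler_pM2r ?invr_gt0 ?subr_gt0 // ler_pdivrMr ?subr_gt0 //.
have -> : t * h x + (1 - t) * h y = h x + (h y - h x) * (1 - t) by ring.
by rewrite lerBlDl.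
Qed.

Lemma convex_onP P h : is_interval P -> convex_on P h <->
  (forall x y t, P x -> P y -> 0 <= t <= 1 ->
     h (t * x + (1 - t) * y) <= t * h x + (1 - t) * h y).
Proof.
move=> iP; split => [cvx|jensen]; last first.
  move=> x z y Px Pz Py /andP[xz zy]; have xy := lt_trans xz zy.
  pose t := (y - z) / (y - x).
  have t1 : t < 1 by rewrite ltr_pdivrMr ?subr_gt0 //; lra.
  have t0 : 0 <= t by rewrite divr_ge0 // subr_ge0 ltW.
  have -> : z = t * x + (1 - t) * y by rewrite /t; field; rewrite subr_eq0 gt_eqF.
  by rewrite slope_le_convex_combE // jensen // t0 ltW.
have jensen_le x y t : P x -> P y -> x <= y -> 0 <= t <= 1 ->
    h (t * x + (1 - t) * y) <= t * h x + (1 - t) * h y.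
  move=> Px Py; rewrite le_eqVlt => /predU1P[<- _|xy /andP[t0 t1]].
    by rewrite -!mulrDl addrC subrK !mul1r.
  have [->|t1'] := eqVneq t 1; first by rewrite subrr !mul0r !addr0 !mul1r.
  have [->|t0'] := eqVneq t 0; first by rewrite subr0 !mul0r !add0r !mul1r.
  have {t0'}t0 : 0 < t by rewrite lt_neqAle eq_sym t0' t0.
  have {t1'}t1 : t < 1 by rewrite lt_neqAle t1' t1.
  rewrite -slope_le_convex_combE //; set z := t * x + (1 - t) * y.
  have xzy : x < z < y.
    by apply/andP; split; rewrite -subr_gt0 /z;
      [have -> : t * x + (1 - t) * y - x = (1 - t) * (y - x) by ring|
       have -> : y - (t * x + (1 - t) * y) = t * (y - x) by ring];
      rewrite mulr_gt0 ?subr_gt0.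
  have Pz : P z by case/andP: xzy => xz zy; apply: (iP x y) => //; rewrite !ltW.
  exact: cvx.
move=> x y t Px Py t01; have [xy|yx] := lerP x y; first exact: jensen_le.
have := jensen_le y x (1 - t) Py Px (ltW yx) ltac:(lra).
by rewrite subKr addrC [t * h x + _]addrC.
Qed.

Lemma convex_on_sub P Q h : Q `<=` P -> convex_on P h -> convex_on Q h.
Proof. by move=> QP cvx x z y Qx Qz Qy; apply: cvx; apply: QP. Qed.

Lemma convex_on_add_affine P h g m q : (forall y, P y -> g y = h y + m * y + q) ->
  convex_on P h -> convex_on P g.
Proof.
move=> gh cvx x z y Px Pz Py xzy; case/andP: (xzy) => xz zy.
rewrite (slope_add_affine (negbT (lt_eqF xz)) (gh x Px) (gh z Pz)).
rewrite (slope_add_affine (negbT (lt_eqF (lt_trans xz zy))) (gh x Px) (gh y Py)).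
by rewrite lerD2r; apply: cvx.
Qed.

Lemma convex_onD P g h : convex_on P g -> convex_on P h ->
  convex_on P (fun y => g y + h y).
Proof.
move=> cg ch x z y Px Pz Py xzy.
have slopeD u v : slope (fun y => g y + h y) u v = slope g u v + slope h u v.
  by rewrite /slope -mulrDl; congr (_ * _); ring.
by rewrite !slopeD lerD //; [apply: cg|apply: ch].
Qed.

Lemma convex_onZ P h k : 0 <= k -> convex_on P h -> convex_on P (fun y => k * h y).
Proof.
move=> k0 ch x z y Px Pz Py xzy.
have slopeZ u v : slope (fun y => k * h y) u v = k * slope h u v.
  by rewrite /slope -mulrBr mulrA.
by rewrite !slopeZ ler_wpM2l //; apply: ch.
Qed.

Lemma convex_on_glue h a p :
  convex_on [set x | a <= x <= p] h -> convex_on [set x | p <= x] h ->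
  (forall x y, a <= x < p -> p < y -> slope h x p <= slope h p y) ->
  convex_on [set x | a <= x] h.
Proof.
move=> cl cr kink x z y /= ax az ay xzy; case/andP: (xzy) => xz zy.
have [yp|py] := lerP y p.
  have zp := ltW (lt_le_trans zy yp); have xp := ltW (lt_le_trans xz zp).
  by apply: cl; rewrite //= ?ax ?az ?ay.
have [px|xp] := lerP p x.
  have pz := le_trans px (ltW xz).
  by apply: cr; rewrite //= ?pz ?(le_trans pz (ltW zy)).
have xpy : x < p < y by rewrite xp py.
have Sxp := kink x y ltac:(by rewrite ax xp) py.
have [zp|pz] := lerP z p.
  have Sxy : slope h x p <= slope h x y by rewrite slope_le_chordE.
  apply: le_trans _ Sxy; have [->|zp'] := eqVneq z p; first exact: lexx.
  have {zp'}zp : z < p by rewrite lt_neqAle zp' zp.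
  have ap := le_trans ax (ltW xp).
  by apply: cl; rewrite /= ?ax ?az ?ap ?(ltW xp) ?(ltW zp) ?lexx ?xz ?zp.
have Sxy : slope h x y <= slope h p y by rewrite slope_chord_leE.
rewrite slope_le_chordE // -slope_chord_leE //; apply: le_trans Sxy _.
by apply: (convex_on_slope_right cr); rewrite /= ?lexx ?(ltW pz) ?(ltW py) ?pz ?py.
Qed.

Lemma convex_on_nondecreasing h a t : a < t -> convex_on [set x | a <= x] h ->
  (forall x y, a <= x -> x <= y -> y <= t -> h x <= h y) ->
  forall x y, a <= x -> x <= y -> h x <= h y.
Proof.
move=> lt_at cvx mono x y ax.
rewrite le_eqVlt => /predU1P[->|xy]; first exact: lexx.
pose b := Num.min y t.
have bt : b <= t by rewrite /b ge_min lexx orbT.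
have b_y : b <= y by rewrite /b ge_min lexx.
have ab : a < b by rewrite lt_min lt_at andbT (le_lt_trans ax xy).
have Sab : 0 <= slope h a b.
  by rewrite divr_ge0 // subr_ge0 ?(ltW ab) ?mono ?(ltW ab).
have := le_trans Sab (convex_on_slope_le cvx (lexx a) (ltW ab) ax
  (le_trans ax (ltW xy)) ab xy ax b_y).
by rewrite /slope pmulr_lge0 ?invr_gt0 ?subr_gt0 // subr_ge0.
Qed.

End Convexity.

Section OneSidedDerivatives.
Variable R : realType.
Implicit Types (v w : R -> R) (a l m p q r x y eta : R).

Lemma slope_leftE v p k : slope v (p - k) p = (v p - v (p - k)) / k.
Proof. by rewrite /slope subKr. Qed.

Lemma slope_rightE v p k : slope v p (p + k) = (v (p + k) - v p) / k.
Proof. by rewrite /slope addrAC subrr add0r. Qed.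

Section Convex.
Variables (v : R -> R) (a p : R).
Hypothesis cvx : convex_on [set x | a <= x] v.

Lemma slope_le_lderiv l x : lderiv_is v p l -> a <= x < p -> slope v x p <= l.
Proof.
move=> hl /andP[ax xp]; apply: (cvgr_to_ge hl); near=> k.
have k0 : 0 < k by near: k; exact: nbhs_right_gt.
have kp : k < p - x by near: k; apply: nbhs_right_lt; rewrite subr_gt0.
by rewrite /= -slope_leftE; apply: (convex_on_slope_le cvx) => /=; lra.
Unshelve. all: by end_near.
Qed.

Lemma lderiv_le_slope l y : lderiv_is v p l -> a < p -> p < y -> l <= slope v p y.
Proof.
move=> hl ap py; apply: (cvgr_to_le hl); near=> k.
have k0 : 0 < k by near: k; exact: nbhs_right_gt.
have kp : k < p - a by near: k; apply: nbhs_right_lt; rewrite subr_gt0.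
by rewrite /= -slope_leftE; apply: (convex_on_slope_le cvx) => /=; lra.
Unshelve. all: by end_near.
Qed.

Lemma rderiv_le_slope r y : rderiv_is v p r -> a <= p -> p < y -> r <= slope v p y.
Proof.
move=> hr ap py; apply: (cvgr_to_le hr); near=> k.
have k0 : 0 < k by near: k; exact: nbhs_right_gt.
have ky : k < y - p by near: k; apply: nbhs_right_lt; rewrite subr_gt0.
by rewrite /= -slope_rightE; apply: (convex_on_slope_le cvx) => /=; lra.
Unshelve. all: by end_near.
Qed.

Lemma lderiv_le_rderiv l r : lderiv_is v p l -> rderiv_is v p r -> a < p -> l <= r.
Proof.
move=> hl hr ap; apply: (cvgr_to_ge hr); near=> k.
have k0 : 0 < k by near: k; exact: nbhs_right_gt.
by rewrite /= -slope_rightE; apply: lderiv_le_slope => //; lra.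
Unshelve. all: by end_near.
Qed.

End Convex.

Section AffinePerturbation.
Variables (v w : R -> R) (p m q eta : R).
Hypotheses (eta0 : 0 < eta)
  (wv : forall y, p - eta <= y <= p + eta -> w y = v y + m * y + q).

Lemma lderiv_is_add_affine l : lderiv_is v p l -> lderiv_is w p (l + m).
Proof.
move=> hl; apply: cvg_trans (cvgD hl (cvg_cst m)); apply: near_eq_cvg; near=> k.
have k0 : 0 < k by near: k; exact: nbhs_right_gt.
have ke : k < eta by near: k; exact: nbhs_right_lt.
rewrite /= -!slope_leftE (slope_add_affine (h := v) (m := m) (q := q)) ?wv;
  first by rewrite slope_leftE.
all: rewrite ?lt_eqF //; try apply/andP; try split; lra.
Unshelve. all: by end_near.
Qed.

Lemma rderiv_is_add_affine r : rderiv_is v p r -> rderiv_is w p (r + m).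
Proof.
move=> hr; apply: cvg_trans (cvgD hr (cvg_cst m)); apply: near_eq_cvg; near=> k.
have k0 : 0 < k by near: k; exact: nbhs_right_gt.
have ke : k < eta by near: k; exact: nbhs_right_lt.
rewrite /= -!slope_rightE (slope_add_affine (h := v) (m := m) (q := q)) ?wv;
  first by rewrite slope_rightE.
all: rewrite ?lt_eqF //; try apply/andP; try split; lra.
Unshelve. all: by end_near.
Qed.

Lemma breakpoints_add_affine : breakpoints v p -> breakpoints w p.
Proof.
move=> [p0 [l [r [hl [hr lr]]]]]; split => //; exists (l + m), (r + m).
split; first exact: lderiv_is_add_affine.
by split; [exact: rderiv_is_add_affine|rewrite (inj_eq (addIr m))].
Qed.

End AffinePerturbation.

End OneSidedDerivatives.

Section PiecewiseAffine.
Variable R : realType.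
Implicit Types (a b c h p q t u y : R) (s : seq R) (g v : R -> R).

Definition piecewise_affine s g := forall a b, a < b ->
  (forall t, t \in s -> ~ (a < t < b)) ->
  exists c d, forall y, a <= y <= b -> g y = c * y + d.

Lemma nbhs_avoid_seq s t : t \notin s ->
  exists2 eta, 0 < eta & forall u, u \in s -> ~ (t - eta < u < t + eta).
Proof.
elim: s => [_|u s IH]; first by exists 1.
rewrite inE negb_or => /andP[tu /IH[eta eta0 avoid]].
have tu0 : 0 < `|t - u| by rewrite normr_gt0 subr_eq0.
exists (Num.min eta `|t - u|); first by rewrite lt_min eta0.
move=> w; rewrite inE => /predU1P[->|ws].
  by rewrite -ltr_distlC lt_min ltxx andbF.
have : Num.min eta `|t - u| <= eta by rewrite ge_min lexx.
by move=> me /andP[h1 h2]; apply: (avoid w ws); apply/andP; split; lra.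
Qed.

Lemma piecewise_affine_near s g t : piecewise_affine s g -> t \notin s ->
  exists2 eta, 0 < eta &
    exists m q, forall y, t - eta <= y <= t + eta -> g y = m * y + q.
Proof.
move=> pg /nbhs_avoid_seq[eta eta0 avoid]; exists eta => //.
by apply: pg avoid; lra.
Qed.

Lemma Vset_sub_piecewise_affine v g s q : Vset v -> continuous g ->
  piecewise_affine s g -> Vset (fun y => v y - g y + q).
Proof.
case=> cv [sv affv] cg pg; split.
  apply/subspace_continuousP => x Rx.
  apply: cvgD; last exact: cvg_cst.
  apply: cvgB; first exact: (subspace_continuousP _ _).1 cv x Rx.
  exact: cvg_within_filter (cg x).
exists (sv ++ s) => a b a0 ab avoid.
have [c1 [d1 e1]] := affv a b a0 ab
  (fun t ts => avoid t ltac:(by rewrite mem_cat ts)).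
have [c2 [d2 e2]] := pg a b ab
  (fun t ts => avoid t ltac:(by rewrite mem_cat ts orbT)).
by exists (c1 - c2), (d1 - d2 + q) => y yab; rewrite e1 // e2 //; ring.
Qed.

Lemma breakpoints_sub_piecewise_affine v g s q : piecewise_affine s g ->
  breakpoints (fun y => v y - g y + q) `<=` breakpoints v `|` [set` s].
Proof.
move=> pg t bt; have [ts|tns] := boolP (t \in s); first by right.
left; have [eta eta0 [m [d gmd]]] := piecewise_affine_near pg tns.
apply: (breakpoints_add_affine (m := m) (q := d - q) eta0 _ bt) => y yt.
by rewrite gmd //; ring.
Qed.

Definition ramp p y := Num.max 0 (y - p).

Lemma ramp_le p y : y <= p -> ramp p y = 0.
Proof. by move=> yp; apply/max_idPl; rewrite subr_le0. Qed.

Lemma ramp_ge p y : p <= y -> ramp p y = y - p.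
Proof. by move=> py; apply/max_idPr; rewrite subr_ge0. Qed.

Lemma continuous_ramp p : continuous (ramp p).
Proof.
move=> y; apply: (@continuous_max _ _ (fun=> 0) (fun y => y - p)).
  exact: cvg_cst.
by apply: cvgB; [exact: cvg_id|exact: cvg_cst].
Qed.

Lemma piecewise_affine_ramp p : piecewise_affine [:: p] (ramp p).
Proof.
move=> a b ab avoid; have {}avoid := avoid p (mem_head _ _).
have [bp|pb] := lerP b p.
  by exists 0, 0 => y /andP[_ yb]; rewrite ramp_le ?(le_trans yb) //; ring.
have pa : p <= a by rewrite leNgt; apply/negP => ap; apply: avoid; rewrite ap pb.
by exists 1, (- p) => y /andP[ay _]; rewrite ramp_ge ?(le_trans pa) //; ring.
Qed.

Lemma convex_on_ramp P p : convex_on P (ramp p).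
Proof.
apply: (convex_on_sub (P := setT)) => //.
apply/convex_onP => [x y _ _ z /andP[]|x y t _ _ /andP[t0 t1]] //.
have rx : x - p <= ramp p x by rewrite le_max lexx orbT.
have ry : y - p <= ramp p y by rewrite le_max lexx orbT.
have r0 u : 0 <= ramp p u by rewrite le_max lexx.
rewrite ge_max; apply/andP; split.
  by rewrite addr_ge0 // mulr_ge0 // subr_ge0.
have -> : t * x + (1 - t) * y - p = t * (x - p) + (1 - t) * (y - p) by ring.
by rewrite lerD // ler_wpM2l // subr_ge0.
Qed.

End PiecewiseAffine.

Lemma convex_on_sub_ramp (R : realType) (v : R -> R) o p l r k : o < p ->
  convex_on [set x | o <= x] v -> lderiv_is v p l -> rderiv_is v p r ->
  k <= r - l -> convex_on [set x | o <= x] (fun y => v y - k * ramp p y).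
Proof.
move=> op cvx hl hr kr.
have left y : y <= p -> v y - k * ramp p y = v y + 0 * y + 0.
  by move=> yp; rewrite ramp_le //; ring.
have right y : p <= y -> v y - k * ramp p y = v y + (- k) * y + k * p.
  by move=> py; rewrite ramp_ge //; ring.
apply: (convex_on_glue (p := p)).
- apply: (convex_on_add_affine (fun y yi => left y (proj2 (andP yi)))).
  by apply: convex_on_sub cvx => y /andP[].
- apply: (convex_on_add_affine (fun y (py : p <= y) => right y py)).
  by apply: convex_on_sub cvx => y /= py; rewrite (le_trans (ltW op)).
move=> x y /andP[ox xp] py.
rewrite (slope_add_affine (negbT (lt_eqF xp)) (left x (ltW xp)) (left p (lexx p))).
rewrite (slope_add_affine (negbT (lt_eqF py)) (right p (lexx p))
  (right y (ltW py))).
have := slope_le_lderiv cvx hl (x := x) ltac:(by rewrite ox xp).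
have := rderiv_le_slope cvx hr (ltW op) py.
lra.
Qed.

Section Tent.
Variable R : realType.
Variables a b c : R.
Hypotheses (ab : a < b) (bc : b < c).
Implicit Types (h q y : R) (v : R -> R) (S : set R).

Definition tent h y :=
  h / (b - a) * ramp a y - (h / (b - a) + h / (c - b)) * ramp b y
  + h / (c - b) * ramp c y.

Let ba0 : b - a != 0. Proof. by rewrite subr_eq0 gt_eqF. Qed.
Let cb0 : c - b != 0. Proof. by rewrite subr_eq0 gt_eqF. Qed.

Lemma tent_out h y : y <= a \/ c <= y -> tent h y = 0.
Proof.
case=> [ya|cy]; rewrite /tent.
  by rewrite !ramp_le // ?(le_trans ya) ?(ltW (lt_trans ab bc)) ?(ltW ab) //; ring.
rewrite !ramp_ge // ?(le_trans _ cy) ?(ltW (lt_trans ab bc)) ?(ltW bc) //.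
by field; rewrite ?ba0 ?cb0.
Qed.

Lemma tent_peak h : tent h b = h.
Proof.
rewrite /tent ramp_ge ?(ltW ab) // ramp_le // ramp_le ?(ltW bc) //.
by field; rewrite ?ba0 ?cb0.
Qed.

Lemma tent_ge0 h y : 0 <= h -> 0 <= tent h y.
Proof.
move=> h0; have [ya|ay] := lerP y a; first by rewrite tent_out //; left.
have [cy|yc] := lerP c y; first by rewrite tent_out //; right.
have al : 0 <= h / (b - a) by rewrite divr_ge0 // subr_ge0 ltW.
have be : 0 <= h / (c - b) by rewrite divr_ge0 // subr_ge0 ltW.
rewrite /tent ramp_ge ?(ltW ay) // (ramp_le (ltW yc)) mulr0 addr0.
have [yb|by_] := lerP y b.
  by rewrite ramp_le // mulr0 subr0 mulr_ge0 // subr_ge0 ltW.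
rewrite ramp_ge ?(ltW by_) //.
have -> : h / (b - a) * (y - a) - (h / (b - a) + h / (c - b)) * (y - b) =
  h / (c - b) * (c - y) by field; rewrite ?ba0 ?cb0.
by rewrite mulr_ge0 // subr_ge0 ltW.
Qed.

Lemma continuous_tent h : continuous (tent h).
Proof.
move=> y; apply: cvgD; first apply: cvgB.
all: by apply: cvgM; [exact: cvg_cst|exact: continuous_ramp].
Qed.

Lemma piecewise_affine_tent h : piecewise_affine [:: a; b; c] (tent h).
Proof.
move=> u w uw avoid.
have ramp_aff p : p \in [:: a; b; c] ->
    exists m q, forall y, u <= y <= w -> ramp p y = m * y + q.
  move=> ps; apply: (piecewise_affine_ramp uw) => t.
  by rewrite inE => /eqP->; exact: avoid.
have [ma [qa ea]] := ramp_aff a (mem_head _ _).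
have [mb [qb eb]] := ramp_aff b ltac:(by rewrite !inE eqxx orbT).
have [mc [qc ec]] := ramp_aff c ltac:(by rewrite !inE eqxx !orbT).
exists (h / (b - a) * ma - (h / (b - a) + h / (c - b)) * mb + h / (c - b) * mc).
exists (h / (b - a) * qa - (h / (b - a) + h / (c - b)) * qb + h / (c - b) * qc).
by move=> y yi; rewrite /tent ea // eb // ec //; ring.
Qed.

Lemma convex_on_sub_tent v o h la ra lc rc : o < a ->
  convex_on [set x | o <= x] v ->
  lderiv_is v a la -> rderiv_is v a ra -> lderiv_is v c lc -> rderiv_is v c rc ->
  0 <= h -> h / (b - a) <= ra - la -> h / (c - b) <= rc - lc ->
  convex_on [set x | o <= x] (fun y => v y - tent h y).
Proof.
move=> oa cvx hla hra hlc hrc h0 ha hc.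
(* v - tent = (v - al ramp a - be ramp c) + (al + be) ramp b, and ramp a is
   affine near c, so removing the first kink keeps the second one intact. *)
set al := h / (b - a); set be := h / (c - b).
pose v1 y := v y - al * ramp a y.
have cv1 : convex_on [set x | o <= x] v1 := convex_on_sub_ramp oa cvx hla hra ha.
have ac : 0 < c - a by rewrite subr_gt0 (lt_trans ab bc).
have v1c y : c - (c - a) <= y <= c + (c - a) -> v1 y = v y + (- al) * y + al * a.
  by rewrite subKr => /andP[ay _]; rewrite /v1 ramp_ge //; ring.
have cv2 : convex_on [set x | o <= x] (fun y => v1 y - be * ramp c y).
  apply: (convex_on_sub_ramp _ cv1 (lderiv_is_add_affine ac v1c hlc)
                                   (rderiv_is_add_affine ac v1c hrc)).
    by rewrite (lt_trans oa) // (lt_trans ab bc).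
  by have -> : rc + - al - (lc + - al) = rc - lc by ring.
have al0 : 0 <= al by rewrite divr_ge0 // subr_ge0 ltW.
have be0 : 0 <= be by rewrite divr_ge0 // subr_ge0 ltW.
have := convex_onD cv2 (convex_onZ (addr_ge0 al0 be0) (convex_on_ramp b)).
apply: (convex_on_add_affine (m := 0) (q := 0)) => y _.
by rewrite /v1 /tent -/al -/be; ring.
Qed.

Lemma VS_sub_tent S v h q : VS S v -> S a -> S b -> S c ->
  VS S (fun y => v y - tent h y + q).
Proof.
case=> Vv bvS Sa Sb Sc; split.
  exact: Vset_sub_piecewise_affine q Vv (@continuous_tent h)
    (@piecewise_affine_tent h).
move=> t /(breakpoints_sub_piecewise_affine (@piecewise_affine_tent h))[/bvS//|].
by rewrite /= !inE => /or3P[] /eqP->.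
Qed.

Lemma Theta_sub_tent v : Theta v -> breakpoints v a -> breakpoints v c ->
  exists2 h, 0 < h & forall q, Theta (fun y => v y - tent h y + q).
Proof.
case=> jensen mono [a0 [la [ra [hla [hra nea]]]]] [_ [lc [rc [hlc [hrc nec]]]]].
have iR : is_interval [set x : R | 0 <= x].
  by move=> x y x0 _ z /andP[xz _]; exact: le_trans xz.
have cvx : convex_on [set x | 0 <= x] v by apply/convex_onP.
have c0 : 0 < c by rewrite (lt_trans a0) // (lt_trans ab bc).
have ka : 0 < ra - la.
  by rewrite subr_gt0 lt_neqAle nea (lderiv_le_rderiv cvx hla hra a0).
have kc : 0 < rc - lc.
  by rewrite subr_gt0 lt_neqAle nec (lderiv_le_rderiv cvx hlc hrc c0).
pose h := Num.min ((ra - la) * (b - a)) ((rc - lc) * (c - b)).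
have h0 : 0 < h by rewrite lt_min !mulr_gt0 // subr_gt0.
exists h => // q.
have cw : convex_on [set x | 0 <= x] (fun y => v y - tent h y + q).
  apply: (convex_on_add_affine (m := 0) (q := q) _
    (convex_on_sub_tent a0 cvx hla hra hlc hrc (ltW h0) _ _)) => [y _||].
  - by rewrite mul0r addr0.
  - by rewrite ler_pdivrMr ?subr_gt0 // ge_min lexx.
  - by rewrite ler_pdivrMr ?subr_gt0 // ge_min lexx orbT.
split; first by apply/(convex_onP _ iR).
apply: (convex_on_nondecreasing a0 cw) => x y x0 xy ya.
rewrite !tent_out ?lerD2r ?lerBlDr ?subr0 ?mono //.
all: by left; rewrite // (le_trans xy).
Qed.

End Tent.

Section Integrals.
Variable R : realType.
Implicit Types (A : set R) (f g v w G : R -> R) (p x : R).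

Lemma measurable_Rge0 : measurable (@Rge0 R).
Proof. exact: measurable_itv. Qed.

Lemma Rge0E x : Rge0 x = (0 <= x).
Proof. by rewrite /Rge0 /= in_itv /= andbT. Qed.

Lemma continuous_within_Rge0_lb G p : {within @Rge0 R, continuous G} ->
  0 < p -> 0 < G p ->
  exists2 d, 0 < d < p & forall y, p - d <= y <= p + d -> G p / 2 <= G y.
Proof.
move=> cG p0 Gp0.
have := (subspace_continuousP _ _).1 cG p ltac:(by rewrite Rge0E ltW).
have Gp2 : G p / 2 < G p by lra.
move=> /cvgr_gt /(_ _ Gp2) /nbhs_ballP[e /= e0 Ge].
have me : Num.min e p <= e by rewrite ge_min lexx.
have mp : Num.min e p <= p by rewrite ge_min lexx orbT.
have m0 : 0 < Num.min e p by rewrite lt_min e0 p0.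
exists (Num.min e p / 2); first by apply/andP; split; lra.
move=> y /andP[y1 y2]; apply/ltW/Ge; last by rewrite Rge0E; lra.
by rewrite -ball_normE /ball_ /= ltr_distlC; apply/andP; split; lra.
Qed.

Lemma integral_Rge0_gt0 G p : measurable_fun (@Rge0 R) G ->
  (forall x, 0 <= x -> 0 <= G x) -> {within @Rge0 R, continuous G} ->
  0 < p -> 0 < G p ->
  (0 < \int[lebesgue_measure]_(x in @Rge0 R) (G x)%:E)%E.
Proof.
move=> mG G0 cG p0 Gp0.
have [d /andP[d0 dp] Gd] := continuous_within_Rge0_lb cG p0 Gp0.
pose I : set R := `[p - d, p + d]%classic.
have mI : measurable I by exact: measurable_itv.
have IR : I `<=` @Rge0 R.
  by move=> y; rewrite /I /= in_itv /= Rge0E => /andP[y1 _]; lra.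
have mGE : measurable_fun (@Rge0 R) (EFin \o G) by apply/measurable_EFinP.
apply: (@lt_le_trans _ _ (\int[lebesgue_measure]_(x in I) (cst (G p / 2)%:E) x)%E).
  rewrite integral_cst //; apply: mule_gt0; first by rewrite lte_fin; lra.
  change (0 < @lebesgue_measure R I)%E.
  rewrite /I lebesgue_measure_itv /= lte_fin.
  rewrite (_ : (p - d < p + d) = true); last by apply/idP; lra.
  by rewrite -EFinD lte_fin; lra.
apply: (@le_trans _ _ (\int[lebesgue_measure]_(x in I) (G x)%:E)%E).
  apply: ge0_le_integral => //.
  - by move=> x _ /=; rewrite lee_fin; lra.
  - exact: (measurable_funS measurable_Rge0 IR mGE).
apply: ge0_subset_integral => //; first exact: measurable_Rge0.
by move=> x; rewrite Rge0E /= lee_fin; exact: G0.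
Qed.

Lemma continuous_within_expR_mul A g f :
  {within A, continuous g} -> {within A, continuous f} ->
  {within A, continuous (fun x => expR (g x) * f x)}.
Proof.
move=> cg cf; apply/subspace_continuousP => x Ax.
apply: cvgM; last exact: (subspace_continuousP _ _).1 cf x Ax.
exact: continuous_cvg (@continuous_expR R (g x))
  ((subspace_continuousP _ _).1 cg x Ax).
Qed.

Lemma exists_normalizing_shift f v w p :
  {within @Rge0 R, continuous f} -> (forall x, 0 <= x -> 0 <= f x) ->
  0 < p -> 0 < f p ->
  {within @Rge0 R, continuous v} -> {within @Rge0 R, continuous w} ->
  (forall x, w x <= v x) -> w p < v p ->
  intM f (fun x => expR (v x)) = 1%E ->
  exists2 c, 0 < c & intM f (fun x => expR (w x + c)) = 1%E.
Proof.
move=> cf f0 p0 fp cv cw wv wvp Iv.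
pose G1 x := expR (w x) * f x.
pose G2 x := expR (v x) * f x - expR (w x) * f x.
have cG1 : {within @Rge0 R, continuous G1} := continuous_within_expR_mul cw cf.
have cG2 : {within @Rge0 R, continuous G2}.
  apply/subspace_continuousP => x Ax.
  by apply: cvgB; apply: (subspace_continuousP _ _).1 => //;
    exact: continuous_within_expR_mul.
have mG1 : measurable_fun (@Rge0 R) G1.
  exact: subspace_continuous_measurable_fun measurable_Rge0 cG1.
have mG2 : measurable_fun (@Rge0 R) G2.
  exact: subspace_continuous_measurable_fun measurable_Rge0 cG2.
have G10 x : 0 <= x -> 0 <= G1 x by move=> x0; rewrite mulr_ge0 ?expR_ge0 ?f0.
have G20 x : 0 <= x -> 0 <= G2 x.
  by move=> x0; rewrite /G2 -mulrBl mulr_ge0 ?f0 // subr_ge0 ler_expR.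
have I1 := integral_Rge0_gt0 mG1 G10 cG1 p0 (mulr_gt0 (expR_gt0 _) fp).
have I2 := integral_Rge0_gt0 mG2 G20 cG2 p0
  ltac:(by rewrite /G2 -mulrBl mulr_gt0 // subr_gt0 ltr_expR).
have G0E (G : R -> R) : (forall x, 0 <= x -> 0 <= G x) ->
    forall x, Rge0 x -> (0 <= (G x)%:E)%E.
  by move=> G0 x; rewrite Rge0E lee_fin; exact: G0.
move: Iv; rewrite /intM.
have -> : (\int[lebesgue_measure]_(x in @Rge0 R) (expR (v x) * f x)%:E =
    \int[lebesgue_measure]_(x in @Rge0 R) ((G1 x)%:E + (G2 x)%:E))%E.
  apply: eq_integral => y _.
  by rewrite /= -(EFinD (G1 y)) /G1 /G2; congr (_%:E); ring.
have mE1 : measurable_fun (@Rge0 R) (EFin \o G1) by apply/measurable_EFinP.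
have mE2 : measurable_fun (@Rge0 R) (EFin \o G2) by apply/measurable_EFinP.
have -> : (\int[lebesgue_measure]_(x in @Rge0 R) ((G1 x)%:E + (G2 x)%:E) =
    \int[lebesgue_measure]_(x in @Rge0 R) (G1 x)%:E +
    \int[lebesgue_measure]_(x in @Rge0 R) (G2 x)%:E)%E.
  apply: ge0_integralD => //; first exact: measurable_Rge0.
  - exact: G0E.
  - exact: G0E.
move: I1 I2.
case E1 : (\int[lebesgue_measure]_(x in @Rge0 R) (G1 x)%:E)%E => [r1| |] //=;
  case: (\int[lebesgue_measure]_(x in @Rge0 R) (G2 x)%:E)%E => [r2| |] //=.
rewrite !lte_fin => r10 r20 /eqP; rewrite -EFinD eqe => /eqP r12.
exists (- ln r1); first by rewrite oppr_gt0 ln_lt0 // r10; lra.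
have -> : (\int[lebesgue_measure]_(x in @Rge0 R) (expR (w x - ln r1) * f x)%:E =
    \int[lebesgue_measure]_(x in @Rge0 R) ((expR (- ln r1))%:E * (G1 x)%:E))%E.
  by apply: eq_integral => y _; rewrite /= -EFinM /G1 expRD; congr (_%:E); ring.
have -> : (\int[lebesgue_measure]_(x in @Rge0 R) ((expR (- ln r1))%:E * (G1 x)%:E) =
    (expR (- ln r1))%:E * \int[lebesgue_measure]_(x in @Rge0 R) (G1 x)%:E)%E.
  apply: ge0_integralZl_EFin => //; [exact: measurable_Rge0|exact: G0E].
by rewrite E1 -EFinM expRN lnK ?posrE // mulVf // gt_eqF.
Qed.

End Integrals.

Lemma Lik_normalized (R : realType) (f : R -> R) n (x : 'I_n -> R) (v : R -> R) :
  intM f (fun t => expR (v t)) = 1%E ->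
  Lik f x v = (n%:R^-1 * \sum_(k < n) v (x k))%:E.
Proof. by move=> Iv; rewrite /Lik Iv -EFinB -EFinD subrK. Qed.

Lemma Lik_shift (R : realType) (f : R -> R) n (x : 'I_n -> R) (v w : R -> R) c :
  (0 < n)%N -> intM f (fun t => expR (v t)) = 1%E ->
  intM f (fun t => expR (w t)) = 1%E -> (forall k, w (x k) = v (x k) + c) ->
  Lik f x w = (Lik f x v + c%:E)%E.
Proof.
move=> n0 Iv Iw wv; rewrite !Lik_normalized // -EFinD; congr EFin.
under eq_bigr => k _ do rewrite wv.
rewrite big_split /= sumr_const card_ord mulrDr -[c *+ n]mulr_natr mulrCA.
by rewrite mulVf ?mulr1 // pnatr_eq0 -lt0n.
Qed.

Lemma exists_three_increasing (R : realType) (B : set R) :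
  ~ (exists s : seq R, (size s <= 2)%N /\ B `<=` [set` s]) ->
  exists t1 t2 t3, [/\ B t1, B t2, B t3, t1 < t2 & t2 < t3].
Proof.
move=> no2.
have [a Ba] : exists a, B a.
  apply: contrapT => N; apply: no2; exists [::]; split => // y By.
  by exfalso; apply: N; exists y.
have [b [Bb ba]] : exists b, B b /\ b != a.
  apply: contrapT => N; apply: no2; exists [:: a]; split => // y By /=.
  rewrite inE; apply: contrapT => /negP ya; apply: N; exists y; split => //.
have [c [Bc ca cb]] : exists c, [/\ B c, c != a & c != b].
  apply: contrapT => N; apply: no2; exists [:: a; b]; split => // y By /=.
  rewrite !inE; apply: contrapT => /negP; rewrite negb_or => /andP[ya yb].
  by apply: N; exists y; split.
case: (ltgtP a b) => [ab|ab|eab]; last by rewrite eab eqxx in ba.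
all: case: (ltgtP b c) => [bc|bc|ebc]; last by rewrite ebc eqxx in cb.
all: case: (ltgtP a c) => [ac|ac|eac]; last by rewrite eac eqxx in ca.
all: first [ by exists a, b, c | by exists a, c, b | by exists b, a, c
           | by exists b, c, a | by exists c, a, b | by exists c, b, a
           | exfalso; lra ].
Qed.

Theorem mainTheorem7 (R : realType) (f : R -> R)
  (hf : is_density f) (hA1 : A1 f) (hA2 : A2 f) (hA3 : A3 f)
  (n : nat) (x : 'I_n -> R) (hx : forall k, 0 <= x k)
  (i j : 'I_n) (hij : x i < x j)
  (hadj : forall k : 'I_n, ~ (x i < x k < x j))
  (theta : R -> R) (hthV : Vset theta) (hthT : Theta theta)
  (thetas : R -> R)
  (hsmem : (VS (breakpoints theta) `&` Theta1 f) thetas)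
  (hsmax : forall v, (VS (breakpoints theta) `&` Theta1 f) v ->
             (Lik f x v <= Lik f x thetas)%E) :
  exists s : seq R, (size s <= 2)%N /\
    breakpoints thetas `&` `]x i, x j[%classic `<=` [set` s].
Proof.
case: hsmem => VSs [Ts Is]; case: hA1 => cf fpos; case: hf => _ [f0 _].
apply: contrapT => /exists_three_increasing[t1 [t2 [t3 []]]].
move=> [B1 I1] [B2 I2] [B3 I3] t12 t23.
move: I1 I3; rewrite /= !in_itv /= => /andP[it1 _] /andP[_ t3j].
have [h h0 Th] := Theta_sub_tent t12 t23 Ts B1 B3.
have VSw q := VS_sub_tent h q VSs (VSs.2 _ B1) (VSs.2 _ B2) (VSs.2 _ B3).
pose w0 y := thetas y - tent t1 t2 t3 h y.
have cw0 : {within @Rge0 R, continuous w0}.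
  have -> : w0 = (fun y => thetas y - tent t1 t2 t3 h y + 0).
    by apply/funext => y; rewrite addr0.
  exact: (VSw 0).1.1.
have [c c0 Ic] := exists_normalizing_shift cf f0 B2.1 (fpos _ B2.1) VSs.1.1 cw0
  (fun y => ltac:(by rewrite lerBlDr lerDl tent_ge0 // ltW))
  ltac:(by rewrite /w0 tent_peak // ltrBlDr ltrDl) Is.
pose w y := w0 y + c.
have wx k : w (x k) = thetas (x k) + c.
  rewrite /w /w0 tent_out ?subr0 //.
  have [|xik] := lerP (x k) (x i); first by left; rewrite (le_trans _ (ltW it1)).
  right; rewrite (le_trans (ltW t3j)) // leNgt; apply/negP => xkj.
  by apply: (hadj k); rewrite xik xkj.
have n0 : (0 < n)%N := leq_ltn_trans (leq0n i) (ltn_ord i).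
have := hsmax w (conj (VSw c) (conj (Th c) Ic)).
by rewrite (Lik_shift n0 Is Ic wx) (Lik_normalized _ Is) -EFinD lee_fin; lra.
Qed.
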